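(* A finitely branching directed graph is locally finite if and only if it contains no quasicycles.
   Context: For a directed graph $G$ and vertices $s,t$, $G(s,t)$ denotes the set of directed paths from $s$ to $t$; $G$ is locally finite if $G(s,t)$ is finite for all vertices $s,t$. $G$ is finitely branching if for every vertex $s$ the set $\{t : G \text{ contains an edge } s\to t\}$ is finite. A quasicycle in $G$ is a pair $(T,t)$ where $T$ is an infinite chain $t_0\to t_1\to t_2\to\cdots$ in $G$, $t$ is a vertex of $G$, and $G$ contains a path $t_i\to t$ for every $i\in\mathbb{N}$. *)

From Stdlib Require Import List.
Import ListNotations.
Set Implicit Arguments.

Inductive dpath {V : Type} (E : V -> V -> Prop) : V -> V -> list V -> Prop :=
| dpath_nil (s : V) : dpath E s s [s]
| dpath_cons (s u t : V) (p : list V) :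
    E s u -> dpath E u t p -> dpath E s t (s :: p).

Definition locally_finite {V : Type} (E : V -> V -> Prop) : Prop :=
  forall s t : V, exists l : list (list V), forall p, dpath E s t p -> In p l.

Definition finitely_branching {V : Type} (E : V -> V -> Prop) : Prop :=
  forall s : V, exists l : list V, forall t, E s t -> In t l.

Definition quasicycle {V : Type} (E : V -> V -> Prop) (T : nat -> V) (t : V) : Prop :=
  (forall i, E (T i) (T (S i))) /\
  (forall i, exists p, dpath E (T i) t p).

(* A quasicycle (T, t) yields paths T_0 -> T_1 -> ... -> T_n -> t of every length, hence
   infinitely many paths from T_0 to t. Conversely, if G(s, t) is infinite, then since s has
   only finitely many successors, one of them also has infinitely many paths to t (König's
   argument); iterating from s gives an infinite chain of such vertices, and each of them has
   at least one path to t, so together with t it forms a quasicycle. *)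

From Stdlib Require Import List.
From Stdlib Require Import Classical ClassicalEpsilon Lia.
Import ListNotations.
Set Implicit Arguments.

Lemma length_le_list_max {A : Type} (l : list (list A)) (p : list A) :
  In p l -> length p <= list_max (map (@length A) l).
Proof.
  intros Hp.
  assert (Hmax := le_n (list_max (map (@length A) l))).
  apply list_max_le in Hmax; rewrite Forall_forall in Hmax; auto using in_map.
Qed.

Lemma list_cover_of_finite_family {A B : Type} (P : A -> Prop) (F : A -> B -> Prop)
    (la : list A) :
  (forall a, In a la -> P a -> exists l, forall b, F a b -> In b l) ->
  exists L, forall a, In a la -> P a -> forall b, F a b -> In b L.
Proof.
  induction la as [|a la IH]; intros Hfin.
  - exists []; simpl; tauto.
  - destruct IH as [L HL]; [intros a' Ha'; apply Hfin; simpl; auto|].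
    destruct (classic (P a)) as [Ha|Ha].
    + destruct (Hfin a (or_introl eq_refl) Ha) as [l Hl].
      exists (l ++ L); intros a' [<-|Ha'] HPa' b Hb; apply in_or_app; eauto.
    + exists L; intros a' [<-|Ha'] HPa' b Hb; [contradiction|eauto].
Qed.

Lemma infinite_chain_of_step {A : Type} {R : A -> A -> Prop} {P : A -> Prop} {s : A} :
  (forall u, P u -> exists w, R u w /\ P w) -> P s ->
  exists T : nat -> A, T 0 = s /\ forall i, P (T i) /\ R (T i) (T (S i)).
Proof.
  intros Hstep Hs.
  assert (next : forall x : {u | P u}, {w : {u | P u} | R (proj1_sig x) (proj1_sig w)}).
  { intros [u Hu].
    destruct (constructive_indefinite_description _ (Hstep u Hu)) as [w [Huw Hw]].
    exists (exist _ w Hw); exact Huw. }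
  pose (chain n := proj1_sig (Nat.iter n (fun x => proj1_sig (next x)) (exist _ s Hs))).
  exists chain; split; [reflexivity|].
  intros i; split; [apply proj2_sig|exact (proj2_sig (next _))].
Qed.

Section Paths.
Variables (V : Type) (E : V -> V -> Prop).

Lemma dpath_length_pos (s t : V) (p : list V) : dpath E s t p -> 1 <= length p.
Proof. destruct 1; simpl; lia. Qed.

Lemma quasicycle_long_paths (T : nat -> V) (t : V) :
  quasicycle E T t -> forall n k, exists p, dpath E (T k) t p /\ n < length p.
Proof.
  intros [Hchain Hreach] n; induction n as [|n IH]; intros k.
  - destruct (Hreach k) as [p Hp].
    exists p; split; [|apply dpath_length_pos in Hp]; auto.
  - destruct (IH (S k)) as [p [Hp Hlen]].
    exists (T k :: p); split; [econstructor; eauto|simpl; lia].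
Qed.

Variable t : V.

Definition finitely_many_paths_to (u : V) : Prop :=
  exists l : list (list V), forall p, dpath E u t p -> In p l.

Lemma finitely_many_paths_of_successors (u : V) (lw : list V) :
  (forall w, E u w -> In w lw) ->
  (forall w, E u w -> finitely_many_paths_to w) -> finitely_many_paths_to u.
Proof.
  intros Hlw Hsucc.
  destruct (list_cover_of_finite_family (E u) (fun w p => dpath E w t p) lw)
    as [L HL]; [intros w _; apply Hsucc|].
  exists ([u] :: map (cons u) L); intros p Hp; inversion Hp; subst.
  - now left.
  - right; apply in_map; eauto.
Qed.

Lemma infinitely_many_paths_step (u : V) :
  finitely_branching E -> ~ finitely_many_paths_to u ->
  exists w, E u w /\ ~ finitely_many_paths_to w.
Proof.
  intros FB Hu; destruct (FB u) as [lw Hlw].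
  apply NNPP; intros Hall; apply Hu.
  apply (finitely_many_paths_of_successors lw Hlw).
  intros w Huw; apply NNPP; eauto.
Qed.

Lemma path_of_infinitely_many_paths (u : V) :
  ~ finitely_many_paths_to u -> exists p, dpath E u t p.
Proof.
  intros Hu; apply NNPP; intros Hnone; apply Hu.
  exists []; intros p Hp; exfalso; eauto.
Qed.

End Paths.

Theorem lemma3p14 (V : Type) (E : V -> V -> Prop) :
  finitely_branching E ->
  (locally_finite E <-> ~ (exists (T : nat -> V) (t : V), quasicycle E T t)).
Proof.
  intros FB; split.
  - intros LF [T [t Hqc]].
    destruct (LF (T 0) t) as [l Hl].
    destruct (quasicycle_long_paths Hqc (list_max (map (@length V) l)) 0)
      as [p [Hp Hlen]].
    apply Hl, length_le_list_max in Hp; lia.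
  - intros Hnoqc s t; apply NNPP; intros Hs.
    destruct (infinite_chain_of_step (fun u => infinitely_many_paths_step FB) Hs)
      as [T [_ HT]].
    apply Hnoqc; exists T, t; split; intros i; [apply HT|].
    apply path_of_infinitely_many_paths, HT.
Qed.
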